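(* Let $A=(a_{i,j})_{i,j=0}^1$ be a $2\times2$ matrix with entries in a commutative ring, and for $n\ge0$ let $A^{\{n\}}=(a^{\{n\}}_{i,j})_{i,j=0}^n$ be its second kind $n$-th Kronecker power. Use the convention that $a^{\{m\}}_{i,j}=0$ whenever an index $i$ or $j$ lies outside $\{0,\dots,m\}$. Then for $n\ge1$ and $0\le j\le n$: Recurrence I: $a^{\{n\}}_{i,j}=a_{0,0}a^{\{n-1\}}_{i,j}+a_{0,1}a^{\{n-1\}}_{i,j-1}$ for $0\le i\le n-1$, and $a^{\{n\}}_{n,j}=a_{1,0}a^{\{n-1\}}_{n-1,j}+a_{1,1}a^{\{n-1\}}_{n-1,j-1}$. Recurrence II: $a^{\{n\}}_{0,j}=a_{0,0}a^{\{n-1\}}_{0,j}+a_{0,1}a^{\{n-1\}}_{0,j-1}$, and $a^{\{n\}}_{i,j}=a_{1,0}a^{\{n-1\}}_{i-1,j}+a_{1,1}a^{\{n-1\}}_{i-1,j-1}$ for $1\le i\le n$. In matrix form, with $L^0_{n-1}=(I_n\mid 0)$ and $L^1_{n-1}=(0\mid I_n)$ the $n\times(n+1)$ matrices obtained by appending a zero column on the right, resp. on the left, of $I_n$: $$A^{\{n\}}=\begin{pmatrix}a_{0,0}I_n\\ (0,\dots,0,a_{1,0})\end{pmatrix}A^{\{n-1\}}L^0_{n-1}+\begin{pmatrix}a_{0,1}I_n\\ (0,\dots,0,a_{1,1})\end{pmatrix}A^{\{n-1\}}L^1_{n-1},$$ $$A^{\{n\}}=\begin{pmatrix}(a_{0,0},0,\dots,0)\\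 a_{1,0}I_n\end{pmatrix}A^{\{n-1\}}L^0_{n-1}+\begin{pmatrix}(a_{0,1},0,\dots,0)\\ a_{1,1}I_n\end{pmatrix}A^{\{n-1\}}L^1_{n-1},$$ where the left factors are $(n+1)\times n$ matrices.
   Context: Second kind Kronecker power: for $A=(a_{i,j})_{i,j=0}^1$ and the linear substitution $z_1=a_{0,0}t_1+a_{0,1}t_2$, $z_2=a_{1,0}t_1+a_{1,1}t_2$, the matrix $A^{\{n\}}=(a^{\{n\}}_{i,j})_{i,j=0}^n$ is defined by $z_1^{n-i}z_2^{i}=\sum_{j=0}^n a^{\{n\}}_{i,j}\,t_1^{n-j}t_2^{j}$ for $0\le i\le n$; $A^{\{0\}}=1$, $A^{\{1\}}=A$. Explicitly $a^{\{n\}}_{i,j}=\sum_{k=0}^j\binom{n-i}{k}\binom{i}{j-k}a_{0,0}^{n-i-k}a_{0,1}^{k}a_{1,0}^{i-j+k}a_{1,1}^{j-k}$, with $\binom{m}{l}=0$ if $m<l$. *)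

From HB Require Import structures.
From mathcomp Require Import all_boot all_order all_algebra.
Set Implicit Arguments. Unset Strict Implicit. Unset Printing Implicit Defensive.
Import Order.TTheory GRing.Theory Num.Theory.
Local Open Scope ring_scope.

(* Entries a_{k,l} of A are A k l with k l : 'I_2.
   z1 = a00 t1 + a01 t2, z2 = a10 t1 + a11 t2; since z1^(n-i) z2^i is
   homogeneous of degree n, its coefficient of t1^(n-j) t2^j equals the
   coefficient of X^j in the dehomogenised polynomial
   (a00 + a01 X)^(n-i) * (a10 + a11 X)^i  (set t1 = 1, t2 = X). *)

Definition kron2_poly (R : comNzRingType) (A : 'M[R]_2) (n i : nat) : {poly R} :=
  ((A 0 0)%:P + (A 0 1)%:P * 'X) ^+ (n - i) * ((A 1 0)%:P + (A 1 1)%:P * 'X) ^+ i.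

Definition kron2 (R : comNzRingType) (A : 'M[R]_2) (n : nat) : 'M[R]_n.+1 :=
  \matrix_(i < n.+1, j < n.+1) (kron2_poly A n i)`_j.

Definition kext (R : comNzRingType) (A : 'M[R]_2) (m : nat) (i j : int) : R :=
  if [&& (0 <= i), (i <= m%:Z), (0 <= j) & (j <= m%:Z)]
  then (kron2_poly A m `|i|%N)`_`|j|%N else 0.

Definition Lzero (R : comNzRingType) (n : nat) : 'M[R]_(n, n.+1) :=
  \matrix_(i < n, j < n.+1) (i == j :> nat)%:R.
Definition Lone (R : comNzRingType) (n : nat) : 'M[R]_(n, n.+1) :=
  \matrix_(i < n, j < n.+1) (j == i.+1 :> nat)%:R.

Definition topI (R : comNzRingType) (n : nat) (a b : R) : 'M[R]_(n.+1, n) :=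
  \matrix_(i < n.+1, k < n)
    (if (i < n)%N then a * (i == k :> nat)%:R else b * (k == n.-1 :> nat)%:R).

Definition botI (R : comNzRingType) (n : nat) (a b : R) : 'M[R]_(n.+1, n) :=
  \matrix_(i < n.+1, k < n)
    (if (i == 0 :> nat) then a * (k == 0 :> nat)%:R else b * (i.-1 == k :> nat)%:R).

From HB Require Import structures.
From mathcomp Require Import all_boot all_order all_algebra.
Import Order.TTheory GRing.Theory Num.Theory.
Local Open Scope ring_scope.

(* Row i of A^{n} lists the coefficients of z1^(n-i) z2^i with z1 = a00 + a01 X
   and z2 = a10 + a11 X.  Passing from n-1 to n multiplies a row polynomial by
   z1 (rows i < n) or by z2 (rows i >= 1), and multiplying by a + b X sends the
   coefficient sequence c to a c_j + b c_(j-1).  In the matrix forms, right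
   multiplication by L^0 keeps the coefficients of a row polynomial of degree
   < n, L^1 gives the coefficients of X times it, and the left factors choose
   which row of A^{n-1} is multiplied by which linear factor. *)

Section SecondKindKroneckerPower.
Variable R : comNzRingType.
Implicit Types (A : 'M[R]_2) (a b : R) (p : {poly R}).

Definition linpoly a b : {poly R} := a%:P + b%:P * 'X.

Lemma coef_linpolyM a b p j :
  (linpoly a b * p)`_j = a * p`_j + b * ('X * p)`_j.
Proof. by rewrite mulrDl coefD coefCM -mulrA coefCM. Qed.

Lemma size_linpoly a b : (size (linpoly a b) <= 2)%N.
Proof.
rewrite /linpoly addrC size_MXaddC.
by case: ifP => // _; rewrite ltnS size_polyC_leq1.
Qed.

Lemma kron2_polyE A n i : kron2_poly A n i =
  linpoly (A 0 0) (A 0 1) ^+ (n - i) * linpoly (A 1 0) (A 1 1) ^+ i.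
Proof. by []. Qed.

Lemma size_kron2_poly A n i : (i <= n)%N -> (size (kron2_poly A n i) <= n.+1)%N.
Proof.
move=> le_in; rewrite kron2_polyE.
have size_exp a b k : (size (linpoly a b ^+ k) <= k.+1)%N.
  apply: leq_trans (size_poly_exp_leq _ _) _; rewrite ltnS -{2}[k]mul1n.
  by rewrite leq_mul // -subn1 leq_subLR size_linpoly.
have sum_exps : ((n - i).+1 + i.+1 = n.+2)%N by rewrite addSn addnS subnK.
apply: leq_trans (size_polyMleq _ _) _.
by rewrite -subn1 leq_subLR add1n -sum_exps leq_add ?size_exp.
Qed.

Lemma kron2_polyS A n i : (i <= n)%N ->
  kron2_poly A n.+1 i = linpoly (A 0 0) (A 0 1) * kron2_poly A n i.
Proof. by move=> le_in; rewrite !kron2_polyE subSn // exprS mulrA. Qed.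

Lemma kron2_polySS A n i :
  kron2_poly A n.+1 i.+1 = linpoly (A 1 0) (A 1 1) * kron2_poly A n i.
Proof. by rewrite !kron2_polyE subSS exprS mulrCA. Qed.

Lemma kext_coef A n (i j : nat) : (i <= n)%N -> kext A n i j = (kron2_poly A n i)`_j.
Proof.
move=> le_in; rewrite /kext !lez_nat le_in /=.
case: leqP => // lt_nj; rewrite nth_default //.
exact: leq_trans (size_kron2_poly A n i le_in) lt_nj.
Qed.

Lemma kext_coefX A n (i j : nat) : (i <= n)%N ->
  kext A n i (j%:Z - 1) = ('X * kron2_poly A n i)`_j.
Proof.
move=> le_in; rewrite coefXM; case: j => [|j] /=; first by rewrite /kext andbF.
by rewrite -predn_int // kext_coef.
Qed.

Lemma kextS A n (i j : nat) : (i <= n)%N ->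
  kext A n.+1 i j = A 0 0 * kext A n i j + A 0 1 * kext A n i (j%:Z - 1).
Proof.
move=> le_in; rewrite kext_coef ?(leqW le_in) // kext_coef // kext_coefX //.
by rewrite kron2_polyS // coef_linpolyM.
Qed.

Lemma kextSS A n (i j : nat) : (i <= n)%N ->
  kext A n.+1 i.+1 j = A 1 0 * kext A n i j + A 1 1 * kext A n i (j%:Z - 1).
Proof.
move=> le_in; rewrite kext_coef // kext_coef // kext_coefX //.
by rewrite kron2_polySS coef_linpolyM.
Qed.

Lemma sum_coef_delta p n (j : nat) : (size p <= n)%N ->
  \sum_(k < n) p`_k * (k == j :> nat)%:R = p`_j.
Proof.
move=> size_p; under eq_bigr => k _ do rewrite mulr_natr mulrb.
rewrite -big_mkcond big_ord1_eq; case: ltnP => // le_nj.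
by rewrite nth_default // (leq_trans size_p).
Qed.

Lemma sum_ord_delta {n} (F : 'I_n -> R) (i : 'I_n) :
  \sum_(k < n) (i == k :> nat)%:R * F k = F i.
Proof.
rewrite (bigD1 i) //= eqxx mul1r big1 ?addr0 // => k ne_ki.
by rewrite val_eqE eq_sym (negPf ne_ki) mul0r.
Qed.

Lemma kron2_mulmx_Lzero A n :
  kron2 A n *m Lzero R n.+1 = \matrix_(i, j) (kron2_poly A n i)`_j.
Proof.
apply/matrixP => i j; rewrite !mxE; under eq_bigr do rewrite !mxE.
exact/sum_coef_delta/size_kron2_poly/(ltn_ord i).
Qed.

Lemma kron2_mulmx_Lone A n :
  kron2 A n *m Lone R n.+1 = \matrix_(i, j) ('X * kron2_poly A n i)`_j.
Proof.
apply/matrixP => i j; rewrite !mxE coefXM; under eq_bigr do rewrite !mxE.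
case: j => [[|j] lt_j] /=; first by rewrite big1 // => k _; rewrite mulr0.
under eq_bigr do rewrite eqSS eq_sym.
exact/sum_coef_delta/size_kron2_poly/(ltn_ord i).
Qed.

Lemma topI_mulmx n q a b (M : 'M[R]_(n.+1, q)) i l :
  (topI n.+1 a b *m M) i l =
    if unlift ord_max i is Some k then a * M k l else b * M ord_max l.
Proof.
rewrite mxE; case: unliftP => [k ->|->].
  under eq_bigr do rewrite mxE lift_max ltn_ord [a * _]mulrC -mulrA.
  exact: (sum_ord_delta (fun k' => a * M k' l)).
under eq_bigr do rewrite mxE ltnn /= eq_sym [b * _]mulrC -mulrA.
exact: (sum_ord_delta (fun k' => b * M k' l) ord_max).
Qed.

Lemma botI_mulmx n q a b (M : 'M[R]_(n.+1, q)) i l :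
  (botI n.+1 a b *m M) i l =
    if unlift ord0 i is Some k then b * M k l else a * M ord0 l.
Proof.
rewrite mxE; case: unliftP => [k ->|->].
  under eq_bigr do rewrite mxE lift0 /= [b * _]mulrC -mulrA.
  exact: (sum_ord_delta (fun k' => b * M k' l)).
under eq_bigr do rewrite mxE /= eq_sym [a * _]mulrC -mulrA.
exact: (sum_ord_delta (fun k' => a * M k' l) ord0).
Qed.

Lemma kron2S_topI A n :
  kron2 A n.+1 = topI n.+1 (A 0 0) (A 1 0) *m kron2 A n *m Lzero R n.+1
               + topI n.+1 (A 0 1) (A 1 1) *m kron2 A n *m Lone R n.+1.
Proof.
rewrite -!mulmxA kron2_mulmx_Lzero kron2_mulmx_Lone.
apply/matrixP => i j; rewrite mxE [RHS]mxE !topI_mulmx.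
case: unliftP => [k ->|->]; rewrite !mxE.
  by rewrite lift_max (kron2_polyS A n k (ltn_ord k)) coef_linpolyM.
by rewrite /= kron2_polySS coef_linpolyM.
Qed.

Lemma kron2S_botI A n :
  kron2 A n.+1 = botI n.+1 (A 0 0) (A 1 0) *m kron2 A n *m Lzero R n.+1
               + botI n.+1 (A 0 1) (A 1 1) *m kron2 A n *m Lone R n.+1.
Proof.
rewrite -!mulmxA kron2_mulmx_Lzero kron2_mulmx_Lone.
apply/matrixP => i j; rewrite mxE [RHS]mxE !botI_mulmx.
case: unliftP => [k ->|->]; rewrite !mxE.
  by rewrite lift0 kron2_polySS coef_linpolyM.
by rewrite /= kron2_polyS // coef_linpolyM.
Qed.

End SecondKindKroneckerPower.

Theorem lemma5p1 (R : comNzRingType) (A : 'M[R]_2) (m : nat) :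
  let n := m.+1 in
  let a00 := A 0 0 in let a01 := A 0 1 in
  let a10 := A 1 0 in let a11 := A 1 1 in
  (* Recurrence I *)
  (forall i j : nat, (i <= n.-1)%N -> (j <= n)%N ->
     kext A n i j = a00 * kext A n.-1 i j + a01 * kext A n.-1 i (j%:Z - 1)) /\
  (forall j : nat, (j <= n)%N ->
     kext A n n j = a10 * kext A n.-1 n.-1 j + a11 * kext A n.-1 n.-1 (j%:Z - 1)) /\
  (* Recurrence II *)
  (forall j : nat, (j <= n)%N ->
     kext A n 0 j = a00 * kext A n.-1 0 j + a01 * kext A n.-1 0 (j%:Z - 1)) /\
  (forall i j : nat, (1 <= i <= n)%N -> (j <= n)%N ->
     kext A n i j = a10 * kext A n.-1 (i%:Z - 1) j
                    + a11 * kext A n.-1 (i%:Z - 1) (j%:Z - 1)) /\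
  (* matrix forms *)
  kron2 A n = topI n a00 a10 *m kron2 A m *m Lzero R n
              + topI n a01 a11 *m kron2 A m *m Lone R n /\
  kron2 A n = botI n a00 a10 *m kron2 A m *m Lzero R n
              + botI n a01 a11 *m kron2 A m *m Lone R n.
Proof.
move=> /=; split; first by move=> i j le_im _; apply: kextS.
split; first by move=> j _; apply: kextSS.
split; first by move=> j _; apply: kextS.
split; last by split; [apply: kron2S_topI | apply: kron2S_botI].
move=> [//|i] j /andP[_ le_im] _.
by rewrite -predn_int //; apply: kextSS.
Qed.
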